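(* The vector space $A$, with $b\cdot a=ba$ ($b\in B$, $a\in A$), coaction $\delta(a)=a_{(1)}\otimes\pi_C(a_{(2)})$, and inner product $\langle a,a'\rangle=\Phi_A(a^*a')$, is a unitary DK-representation, i.e. an object of ${}_B\mathrm{Rep}^C$.
   Context: $A$ is a CQG Hopf $*$-algebra: a complex Hopf algebra $(A,\Delta_A,\varepsilon_A,S_A)$ with anti-linear involution making it a $*$-algebra with $\Delta_A$ a $*$-homomorphism, admitting a state $\Phi_A$ with $(\Phi_A\otimes\mathrm{id})\Delta_A(a)=\Phi_A(a)1=(\mathrm{id}\otimes\Phi_A)\Delta_A(a)$. $B\subseteq A$ is a unital right coideal $*$-subalgebra ($\Delta_A(B)\subseteq B\odot A$), $B_+=B\cap\ker\varepsilon_A$, $C=A/AB_+$ with quotient map $\pi_C$; $C$ is a coalgebra (comultiplication induced by $\Delta_A$), a left $A$-module by $a\cdot\pi_C(a')=\pi_C(aa')$, with involution $\pi_C(a)^\dagger=\pi_C(S_A(a)^* )$. ${}_B\mathrm{Rep}^C$: left $B$-modules $V$ with right $C$-comodule structure $v\mapsto v_{(0)}\otimes v_{(1)}$ satisfying $(bv)_{(0)}\otimes(bv)_{(1)}=b_{(1)}v_{(0)}\otimes b_{(2)}\cdot v_{(1)}$, which are pre-Hilbert spaces with $\langle v,bw\rangle=\langle b^*v,w\rangle$ and $\langle v,w_{(0)}\rangle w_{(1)}=\langle v_{(0)},w\rangle v_{(1)}^\dagger$. *)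

From mathcomp Require Import all_boot all_order all_algebra.
From mathcomp Require Import reals complex.
Set Implicit Arguments. Unset Strict Implicit. Unset Printing Implicit Defensive.
Import Order.TTheory GRing.Theory Num.Theory.
Local Open Scope ring_scope.

(* * An element of an algebraic tensor product  V (x) W  is represented by a *)
(*   finite list  [:: (v_1,w_1); ...; (v_n,w_n)]  standing for               *)
(*   sum_i v_i (x) w_i.  Two such lists denote the same tensor iff all       *)
(*   products of linear functionals  f (x) g  agree on them (over a field    *)
(*   this is exactly equality in V (x) W).                                   *)
(* * Triple tensors are compared in the same way with  f (x) g (x) h.        *)
(* * The quotient  C = A / A B_+  is represented by A itself; a linear       *)
(*   functional on C is a linear functional on A vanishing on A B_+.         *)

Section Defs.
Variable R : realType.
Local Notation K := (R[i]).

Definition lin_fun (V : lmodType K) (f : V -> K) : Prop :=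
  forall (a : K) (u v : V), f (a *: u + v) = a * f u + f v.

Definition teq (V W : lmodType K) (s t : seq (V * W)) : Prop :=
  forall (f : V -> K) (g : W -> K), lin_fun f -> lin_fun g ->
    \sum_(x <- s) f x.1 * g x.2 = \sum_(x <- t) f x.1 * g x.2.

Definition tscale (V W : lmodType K) (k : K) (s : seq (V * W)) : seq (V * W) :=
  [seq (k *: x.1, x.2) | x <- s].

Variable A : algType K.

Definition is_CQG_Hopf_star (Delta : A -> seq (A * A)) (eps : A -> K)
    (S : A -> A) (star : A -> A) (Phi : A -> K) : Prop :=
  [/\
   [/\ (forall (k : K) (a b : A), teq (Delta (k *: a + b)) (tscale k (Delta a) ++ Delta b)),
   teq (Delta 1) [:: (1, 1)],
   (forall a b : A, teq (Delta (a * b))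
        [seq (x.1 * y.1, x.2 * y.2) | x <- Delta a, y <- Delta b]) &
   (forall (a : A) (f g h : A -> K), lin_fun f -> lin_fun g -> lin_fun h ->
      \sum_(x <- Delta a) \sum_(y <- Delta x.1) f y.1 * g y.2 * h x.2 =
      \sum_(x <- Delta a) \sum_(y <- Delta x.2) f x.1 * g y.1 * h y.2)],
   [/\ lin_fun eps, eps 1 = 1, (forall a b, eps (a * b) = eps a * eps b),
       (forall a, \sum_(x <- Delta a) eps x.1 *: x.2 = a) &
       (forall a, \sum_(x <- Delta a) eps x.2 *: x.1 = a)],
   [/\ (forall (k : K) (a b : A), S (k *: a + b) = k *: S a + S b),
       (forall a, \sum_(x <- Delta a) S x.1 * x.2 = eps a *: 1) &
       (forall a, \sum_(x <- Delta a) x.1 * S x.2 = eps a *: 1)],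
   [/\ (forall (k : K) (a b : A), star (k *: a + b) = (k^*)%C *: star a + star b),
       (forall a b, star (a * b) = star b * star a),
       (forall a, star (star a) = a) &
       (forall a, teq (Delta (star a)) [seq (star x.1, star x.2) | x <- Delta a])] &
   [/\ lin_fun Phi, Phi 1 = 1, (forall a, 0 <= Phi (star a * a)),
       (forall a, \sum_(x <- Delta a) Phi x.1 *: x.2 = Phi a *: 1) &
       (forall a, \sum_(x <- Delta a) Phi x.2 *: x.1 = Phi a *: 1)]].

Definition is_right_coideal_star_subalg (Delta : A -> seq (A * A))
    (star : A -> A) (B : A -> Prop) : Prop :=
  [/\ B 1,
      (forall (k : K) (a b : A), B a -> B b -> B (k *: a + b)),
      (forall a b, B a -> B b -> B (a * b)),
      (forall a, B a -> B (star a)) &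
      (forall b, B b -> exists s : seq (A * A),
          teq (Delta b) s /\ (forall x, x \in s -> B x.1))].

Definition in_ABplus (eps : A -> K) (B : A -> Prop) (a : A) : Prop :=
  exists s : seq (A * A),
    (forall x, x \in s -> B x.2 /\ eps x.2 = 0) /\ a = \sum_(x <- s) x.1 * x.2.

Definition lin_funC (eps : A -> K) (B : A -> Prop) (g : A -> K) : Prop :=
  lin_fun g /\ forall a, in_ABplus eps B a -> g a = 0.

(* equality of tensors in V (x) C; second components are representatives in A
   of elements pi_C(a) of C *)
Definition teqC (eps : A -> K) (B : A -> Prop) (V : lmodType K)
    (s t : seq (V * A)) : Prop :=
  forall (f : V -> K) (g : A -> K), lin_fun f -> lin_funC eps B g ->
    \sum_(x <- s) f x.1 * g x.2 = \sum_(x <- t) f x.1 * g x.2.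

(* The comultiplication of C is  pi_C(a) |-> pi_C(a_(1)) (x) pi_C(a_(2)),
   its counit is  pi_C(a) |-> eps a, the A-action on C is a . pi_C(a') =
   pi_C(a a'), and  pi_C(a)^dagger = pi_C(star (S a)). *)
Definition is_BRepC (Delta : A -> seq (A * A)) (eps : A -> K)
    (S : A -> A) (star : A -> A) (B : A -> Prop)
    (V : lmodType K) (act : A -> V -> V) (delta : V -> seq (V * A))
    (ip : V -> V -> K) : Prop :=
  [/\
   [/\ (forall b (k : K) (v w : V), B b -> act b (k *: v + w) = k *: act b v + act b w),
       (forall b b' (k : K) (v : V), B b -> B b' ->
          act (k *: b + b') v = k *: act b v + act b' v),
       (forall v, act 1 v = v) &
       (forall b b' v, B b -> B b' -> act (b * b') v = act b (act b' v))],
   [/\ (forall (k : K) (v w : V),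
          teqC eps B (delta (k *: v + w)) (tscale k (delta v) ++ delta w)),
       (forall (v : V) (f : V -> K) (g h : A -> K),
          lin_fun f -> lin_funC eps B g -> lin_funC eps B h ->
          \sum_(x <- delta v) \sum_(y <- delta x.1) f y.1 * g y.2 * h x.2 =
          \sum_(x <- delta v) \sum_(y <- Delta x.2) f x.1 * g y.1 * h y.2) &
       (forall v, \sum_(x <- delta v) eps x.2 *: x.1 = v)],
   (* compatibility  (bv)_(0) (x) (bv)_(1) = b_(1) v_(0) (x) b_(2) . v_(1),
      using any representative of Delta b in B (x) A *)
   (forall b v (s : seq (A * A)), B b -> teq (Delta b) s -> (forall x, x \in s -> B x.1) ->
      teqC eps B (delta (act b v))
        [seq (act y.1 x.1, y.2 * x.2) | y <- s, x <- delta v]),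
   [/\ (forall (k : K) (u v w : V), ip u (k *: v + w) = k * ip u v + ip u w),
       (forall u v, ip v u = (ip u v)^*%C) &
       (forall v, v != 0 -> 0 < ip v v)] &
   [/\ (forall b v w, B b -> ip v (act b w) = ip (act (star b) v) w) &
   (* <v, w_(0)> w_(1) = <v_(0), w> v_(1)^dagger  in C *)
   (forall v w, in_ABplus eps B
      (\sum_(x <- delta w) ip v x.1 *: x.2 -
       \sum_(x <- delta v) ip x.1 w *: star (S x.2)))]].

End Defs.

(* The inner product <a, a'> = Phi (a^* a') is positive definite because the
   Haar state is faithful.  If Phi (v^* v) = 0, Cauchy-Schwarz gives
   Phi (c v) = 0 for every c.  Strong right invariance
   Phi (b a_(2)) a_(1) = Phi (b_(2) a) S (b_(1)) then kills Phi (c v_(2)) v_(1)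
   for every c, and counit, antipode and coassociativity give
   v = Phi (S (v_(12)) v_(2)) v_(11); expanding the first leg along finitely
   many functionals shows v = 0.  Compatibility of <,> with the coaction is
   strong left invariance Phi (a_(1) b) a_(2) = Phi (a b_(1)) S (b_(2)) at
   a = w^*; the other axioms are transcriptions of the Hopf structure.
   Tensors are known only through their pairings with products of
   functionals, which determine their images under every multilinear map
   because, by Zorn's lemma, functionals separate the vectors of any space. *)

From HB Require Import structures.
From mathcomp Require Import all_boot all_order all_algebra.
From mathcomp Require Import reals complex boolp classical_sets.
From mathcomp Require Import ring.
Import Order.TTheory GRing.Theory Num.Theory.
Set Implicit Arguments. Unset Strict Implicit. Unset Printing Implicit Defensive.
Local Open Scope ring_scope.

Section LinearFor.
Variables (F : pzRingType) (U : lmodType F) (V : zmodType) (s : GRing.Scale.law F V).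
Variables (f : U -> V) (lf : linear_for s f).

Definition linear_of : {linear U -> V | s} :=
  HB.pack f (GRing.isLinear.Build _ _ _ s f lf).

Lemma linear_for0 : f 0 = 0. Proof. exact: (linear0 linear_of). Qed.
Lemma linear_forD u v : f (u + v) = f u + f v. Proof. exact: (linearD linear_of). Qed.
Lemma linear_forB u v : f (u - v) = f u - f v. Proof. exact: (linearB linear_of). Qed.
Lemma linear_forZ a u : f (a *: u) = s a (f u). Proof. exact: (linearZ_LR linear_of). Qed.
Lemma linear_for_sum (I : Type) (r : seq I) (G : I -> U) :
  f (\sum_(i <- r) G i) = \sum_(i <- r) f (G i).
Proof. exact: (linear_sum linear_of). Qed.

End LinearFor.

Section LinearCombinators.
Variables (F : comNzRingType) (U Z : lmodType F).

Lemma linear_id_fun : linear (fun u : U => u).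
Proof. by []. Qed.

Lemma linear_sum_fun (I : Type) (r : seq I) (G : I -> U -> Z) :
  (forall i, linear (G i)) -> linear (fun u => \sum_(i <- r) G i u).
Proof.
move=> lG k x y; rewrite scaler_sumr -big_split /=.
by apply: eq_bigr => i _; rewrite lG.
Qed.

Lemma linear_scale_fun k (G : U -> Z) : linear G -> linear (fun u => k *: G u).
Proof. by move=> lG a x y; rewrite lG scalerDr !scalerA mulrC. Qed.

Lemma linear_scalar_scale_fun (f : U -> F) (z : Z) :
  scalar f -> linear (fun u => f u *: z).
Proof. by move=> lf a x y; rewrite lf scalerDl scalerA. Qed.

Lemma linear_comp_fun (W : lmodType F) (V : zmodType) (s : GRing.Scale.law F V)
    (f : W -> V) (G : U -> W) :
  linear_for s f -> linear G -> linear_for s (fun u => f (G u)).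
Proof. by move=> lf lG a x y; rewrite lG lf. Qed.

Variable B : algType F.

Lemma linear_mulr_fun (G : U -> B) c : linear G -> linear (fun u => G u * c).
Proof. by move=> lG a x y; rewrite lG mulrDl scalerAl. Qed.

Lemma linear_mull_fun (G : U -> B) c : linear G -> linear (fun u => c * G u).
Proof. by move=> lG a x y; rewrite lG mulrDr scalerAr. Qed.

End LinearCombinators.

Arguments linear_id_fun {F U}.

Section PositiveForm.
Variables (C : numClosedFieldType) (V : lmodType C) (form : V -> V -> C).
Hypothesis form_linear : forall x, scalar (form x).
Hypothesis form_conj_linear : forall y, linear_for (Num.conj_op \; *%R) (form^~ y).
Hypothesis form_ge0 : forall x, 0 <= form x x.

Lemma form_expand a b x y :
  form (a *: x + b *: y) (a *: x + b *: y) =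
  a^* * a * form x x + a^* * b * form x y + b^* * a * form y x + b^* * b * form y y.
Proof.
rewrite !(linear_forD (form_linear _)) !(linear_forZ (form_linear _)) /=.
rewrite !(linear_forD (form_conj_linear _)) !(linear_forZ (form_conj_linear _)) /=.
ring.
Qed.

Lemma form_real_sum x y : form x y + form y x \is Num.real.
Proof.
have -> : form x y + form y x =
    form (1 *: x + 1 *: y) (1 *: x + 1 *: y) - form x x - form y y.
  by rewrite form_expand conjC1; ring.
by rewrite !rpredB ?ger0_real.
Qed.

Lemma form_hermitian x y : form y x = (form x y)^*.
Proof.
(* [a + b] and ['i * (a - b)] are real, where [a = form x y], [b = form y x]. *)
have Ei : 'i * (form x y - form y x) =
    form (1 *: x + 'i *: y) (1 *: x + 'i *: y) - form x x - form y y.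
  by rewrite form_expand conjC1 conjCi !mulNr mulCii; ring.
have /conj_Creal := form_real_sum x y.
have /conj_Creal : 'i * (form x y - form y x) \is Num.real.
  by rewrite Ei !rpredB ?ger0_real.
rewrite rmorphM rmorphB rmorphD /= conjCi => /(congr1 ( *%R 'i)).
rewrite !mulrA mulrN mulCii opprK mul1r mulN1r opprB => hB hD.
apply/eqP; rewrite -(eqr_pMn2r (n := 2)) //; apply/eqP.
have -> : (form x y)^* *+ 2 =
    ((form x y)^* - (form y x)^*) + ((form x y)^* + (form y x)^*) by ring.
by rewrite hB hD; ring.
Qed.

Lemma form_null x : form x x = 0 -> forall y, form y x = 0.
Proof.
move=> x0 y; set a := form y x; set c := form y y.
have c_ge0 : 0 <= c := form_ge0 y.
have c2_gt0 : 0 < c + 2 by rewrite ltr_wpDl.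
have c1_conj : (c + 1)^* = c + 1 by rewrite geC0_conj // addr_ge0.
have := form_ge0 ((c + 1) *: x + (- a) *: y).
rewrite form_expand x0 (form_hermitian y x) -/a -/c c1_conj rmorphN.
have -> : (c + 1) * (c + 1) * 0 + (c + 1) * - a * a^* + - a^* * (c + 1) * a +
    - a^* * - a * c = - ((c + 2) * (a * a^*)) by ring.
rewrite oppr_ge0 pmulr_rle0 // => aa_le0.
by apply/eqP; rewrite -mul_conjC_eq0 eq_le aa_le0 mul_conjC_ge0.
Qed.

End PositiveForm.

Section Separation.
Variables (F : fieldType) (V : lmodType F).
Local Open Scope classical_set_scope.

Definition subspace_set (X : set V) := forall k x y, X x -> X y -> X (k *: x + y).

Variable v : V.
Hypothesis v_neq0 : v != 0.

Lemma maximal_subspace_avoiding : exists H : set V,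
  [/\ subspace_set H, ~ H v & forall H', H `<` H' -> subspace_set H' -> H' v].
Proof.
pose P (X : set V) := subspace_set X /\ ~ X v.
have [H [[Hsub Hv] Hmax]] : exists H, P H /\ forall H', H `<` H' -> ~ P H'.
  apply: Zorn_bigcup => Fam FamP Famtot; split; last first.
    by case=> X FX Xv; have [] := FamP X FX.
  move=> k x y [X FX Xx] [Y FY Yy].
  have [XY|YX] := Famtot X Y FX FY.
    by exists Y => //; apply: (FamP Y FY).1 => //; apply: XY.
  by exists X => //; apply: (FamP X FX).1 => //; apply: YX.
exists H; split=> // H' HH' H'sub.
by apply: contrapT => H'v; apply: (Hmax H' HH').
Qed.

Section MaximalSubspace.
Variable H : set V.
Hypotheses (Hsub : subspace_set H) (Hv : ~ H v).
Hypothesis Hmax : forall H', H `<` H' -> subspace_set H' -> H' v.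

Lemma maximal_subspace0 : H 0.
Proof.
apply: contrapT => H0.
have Hempty x : ~ H x.
  by move=> Hx; apply: H0; rewrite -(addNr x) -scaleN1r; apply: Hsub.
have : [set 0] v.
  apply: Hmax; first by split=> [x /Hempty|/(_ 0 erefl)].
  by move=> k x y -> ->; rewrite scaler0 addr0.
by move/eqP; rewrite (negbTE v_neq0).
Qed.

Lemma maximal_subspaceZ k x : H x -> H (k *: x).
Proof.
by move=> Hx; rewrite -[_ *: _]addr0; apply: Hsub => //; apply: maximal_subspace0.
Qed.

Lemma maximal_subspace_coord_uniq x t t' :
  H (x - t *: v) -> H (x - t' *: v) -> t = t'.
Proof.
move=> Ht Ht'; apply: contrapT => /eqP /negPf tt'.
have : H ((t - t') *: v).
  have -> : (t - t') *: v = (-1) *: (x - t *: v) + (x - t' *: v).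
    by rewrite scaleN1r opprB scalerBl addrA subrK.
  exact: Hsub.
by move/(maximal_subspaceZ (t - t')^-1); rewrite scalerA mulVf ?subr_eq0 ?tt' // scale1r.
Qed.

Lemma maximal_subspace_coord x : exists t, H (x - t *: v).
Proof.
apply: contrapT => /forallNP Hx.
pose H' y := exists a s, H a /\ y = a + s *: x.
have [a [s [Ha vE]]] : H' v.
  apply: Hmax.
    split=> [a Ha|H'H]; first by exists a, 0; rewrite scale0r addr0.
    apply: (Hx 0); rewrite scale0r subr0; apply: H'H.
    by exists 0, 1; rewrite add0r scale1r; split=> //; apply: maximal_subspace0.
  move=> k y z [a [s [Ha ->]]] [a' [s' [Ha' ->]]].
  exists (k *: a + a'), (k * s + s'); split; first exact: Hsub.
  by rewrite scalerDr scalerA scalerDl addrACA.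
have [s0|s_neq0] := eqVneq s 0.
  by apply: Hv; move: vE; rewrite s0 scale0r addr0 => ->.
apply: (Hx s^-1).
have -> : x - s^-1 *: v = (- s^-1) *: a.
  rewrite vE scalerDr scalerA mulVf // scale1r scaleNr.
  by rewrite opprD addrCA subrr addr0.
exact: maximal_subspaceZ.
Qed.

End MaximalSubspace.

Lemma scalar_separating : exists f : V -> F, scalar f /\ f v = 1.
Proof.
have [H [Hsub Hv Hmax]] := maximal_subspace_avoiding.
have [f fP] := choice (maximal_subspace_coord Hsub Hv Hmax).
exists f; split.
  move=> k x y; apply: (maximal_subspace_coord_uniq Hsub Hv Hmax (fP _)).
  have -> : k *: x + y - (k * f x + f y) *: v = k *: (x - f x *: v) + (y - f y *: v).
    by rewrite scalerDl -scalerA scalerBr opprD addrACA.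
  exact: Hsub.
apply: (maximal_subspace_coord_uniq Hsub Hv Hmax (fP v)).
by rewrite scale1r subrr; apply: maximal_subspace0.
Qed.

End Separation.

Section ReproducingSystem.
Variables (F : fieldType) (V : lmodType F).

Lemma eq_scalar (u w : V) : (forall f : V -> F, scalar f -> f u = f w) -> u = w.
Proof.
move=> fuw; apply/eqP; rewrite -subr_eq0; apply/negPn/negP.
move=> /scalar_separating [f [lf]]; rewrite (linear_forB lf) fuw // subrr.
by move/eqP; rewrite eq_sym oner_eq0.
Qed.

Definition reproduces (sys : seq ({scalar V} * V)) (s : seq V) :=
  forall u, u \in s -> u = \sum_(p <- sys) p.1 u *: p.2.

Lemma reproduces_exists s : exists sys, reproduces sys s.
Proof.
elim: s => [|u s [sys IH]]; first by exists [::].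
pose P x := x - \sum_(p <- sys) p.1 x *: p.2.
have P0 w : w \in s -> P w = 0 by move=> /IH wE; rewrite /P -wE subrr.
have [Pu0|Pu_neq0] := eqVneq (P u) 0.
  exists sys => w; rewrite inE => /predU1P [->|/IH //].
  by apply/eqP; rewrite -subr_eq0; exact/eqP.
have lP : linear P.
  move=> k x y; rewrite /P.
  under eq_bigr => p _ do rewrite linearP /= scalerDl -scalerA.
  by rewrite big_split /= -scaler_sumr scalerBr opprD addrACA.
have [f [lf fPu]] := scalar_separating Pu_neq0.
have lfP : scalar (fun x => f (P x)) by move=> k x y; rewrite lP; apply: lf.
exists ((linear_of lfP, P u) :: sys) => w; rewrite inE big_cons /=.
case/predU1P => [->|/[dup] ws /IH {1}->]; first by rewrite fPu scale1r /P subrK.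
by rewrite P0 // (linear_for0 lf) scale0r add0r.
Qed.

Lemma reproduces_linear (Z : lmodType F) sys s (G : V -> Z) u :
  reproduces sys s -> linear G -> u \in s -> G u = \sum_(p <- sys) p.1 u *: G p.2.
Proof.
move=> Hs lG /Hs {1}->; rewrite (linear_for_sum lG).
by apply: eq_bigr => p _; rewrite (linear_forZ lG).
Qed.

Lemma sum_bilinear_contract (W Z : lmodType F) (L : seq (V * W)) sys s
    (B : V -> W -> Z) :
  reproduces sys s -> {subset [seq x.1 | x <- L] <= s} -> bilinear_for *:%R *:%R B ->
  \sum_(x <- L) B x.1 x.2 = \sum_(p <- sys) B p.2 (\sum_(x <- L) p.1 x.1 *: x.2).
Proof.
move=> Hs HL [B1 B2].
rewrite (eq_big_seq _ (fun x xL => reproduces_linear Hs (B1 x.2) (HL _ (map_f _ xL)))).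
rewrite exchange_big; apply: eq_bigr => p _.
by rewrite (linear_for_sum (B2 _)); apply: eq_bigr => x _; rewrite (linear_forZ (B2 _)).
Qed.

End ReproducingSystem.

Definition trilinear (R : nzRingType) (U V W Z : lmodType R) (T : U -> V -> W -> Z) :=
  [/\ forall v w, linear (fun u => T u v w), forall u w, linear (fun v => T u v w)
    & forall u v, linear (T u v)].

Section Tensors.
Variable R : realType.
Local Notation K := R[i].

Lemma teq_bilinear (V W Z : lmodType K) (s t : seq (V * W)) (B : V -> W -> Z) :
  teq s t -> bilinear_for *:%R *:%R B ->
  \sum_(x <- s) B x.1 x.2 = \sum_(x <- t) B x.1 x.2.
Proof.
(* Contract the first legs along a reproducing system: the second-leg vectors
   obtained from [s] and from [t] agree, since all functionals agree on them. *)
move=> st HB.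
have [sys Hsys] := reproduces_exists ([seq x.1 | x <- s] ++ [seq x.1 | x <- t]).
rewrite (sum_bilinear_contract Hsys _ HB) => [|x xs]; last by rewrite mem_cat xs.
rewrite (sum_bilinear_contract Hsys _ HB) => [|x xt]; last by rewrite mem_cat xt orbT.
apply: eq_bigr => p _; congr (B _ _); apply: eq_scalar => g lg.
rewrite !(linear_for_sum lg).
under eq_bigr do rewrite (linear_forZ lg) /=.
under [RHS]eq_bigr do rewrite (linear_forZ lg) /=.
exact: st (linearP p.1) lg.
Qed.

Lemma teq3_trilinear (U V W Z : lmodType K) (L1 L2 : seq (U * V * W))
    (T : U -> V -> W -> Z) :
  (forall f g h, lin_fun f -> lin_fun g -> lin_fun h ->
     \sum_(z <- L1) f z.1.1 * g z.1.2 * h z.2 =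
     \sum_(z <- L2) f z.1.1 * g z.1.2 * h z.2) ->
  trilinear T ->
  \sum_(z <- L1) T z.1.1 z.1.2 z.2 = \sum_(z <- L2) T z.1.1 z.1.2 z.2.
Proof.
move=> L12 [T1 T2 T3].
set s := [seq z.1.1 | z <- L1] ++ [seq z.1.1 | z <- L2].
have [sys Hsys] := reproduces_exists s.
have contract L : {subset [seq z.1.1 | z <- L] <= s} ->
    \sum_(z <- L) T z.1.1 z.1.2 z.2 =
    \sum_(p <- sys) \sum_(y <- [seq (z.1.2, p.1 z.1.1 *: z.2) | z <- L]) T p.2 y.1 y.2.
  move=> Ls; rewrite (eq_big_seq _ (fun z zL =>
    reproduces_linear Hsys (T1 z.1.2 z.2) (Ls _ (map_f _ zL)))).
  rewrite exchange_big; apply: eq_bigr => p _; rewrite big_map.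
  by apply: eq_bigr => z _; rewrite (linear_forZ (T3 _ _)).
rewrite contract => [|z z1]; last by rewrite mem_cat z1.
rewrite contract => [|z z2]; last by rewrite mem_cat z2 orbT.
apply: eq_bigr => p _; apply: teq_bilinear => [f g lf lg|]; last first.
  by split=> [w|v]; [apply: T2 | apply: T3].
rewrite !big_map /=.
under eq_bigr do rewrite (linear_forZ lg) /= mulrCA mulrA.
under [RHS]eq_bigr do rewrite (linear_forZ lg) /= mulrCA mulrA.
exact: L12 (linearP p.1) lf lg.
Qed.

End Tensors.

Section CQGHopfStar.
Variable R : realType.
Local Notation K := R[i].
Variables (A : algType K) (Delta : A -> seq (A * A)) (eps : A -> K).
Variables (S star : A -> A) (Phi : A -> K).
Hypothesis HA : is_CQG_Hopf_star Delta eps S star Phi.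

Lemma teq_DeltaP k a b : teq (Delta (k *: a + b)) (tscale k (Delta a) ++ Delta b).
Proof. by case: HA => [[DeltaP _ _ _] _ _ _ _]; apply: DeltaP. Qed.

Lemma teq_DeltaM a b :
  teq (Delta (a * b)) [seq (x.1 * y.1, x.2 * y.2) | x <- Delta a, y <- Delta b].
Proof. by case: HA => [[_ _ DeltaM _] _ _ _ _]; apply: DeltaM. Qed.

Lemma Delta_coassoc a (f g h : A -> K) : lin_fun f -> lin_fun g -> lin_fun h ->
  \sum_(x <- Delta a) \sum_(y <- Delta x.1) f y.1 * g y.2 * h x.2 =
  \sum_(x <- Delta a) \sum_(y <- Delta x.2) f x.1 * g y.1 * h y.2.
Proof. by case: HA => [[_ _ _ coassoc] _ _ _ _]; apply: coassoc. Qed.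

Lemma counitl a : \sum_(x <- Delta a) eps x.1 *: x.2 = a.
Proof. by case: HA => _ [_ _ _ counit _] _ _ _; apply: counit. Qed.

Lemma counitr a : \sum_(x <- Delta a) eps x.2 *: x.1 = a.
Proof. by case: HA => _ [_ _ _ _ counit] _ _ _; apply: counit. Qed.

Lemma S_linear : linear S.
Proof. by case: HA => _ _ [SP _ _] _ _; apply: SP. Qed.

Lemma antipodel a : \sum_(x <- Delta a) S x.1 * x.2 = eps a *: 1.
Proof. by case: HA => _ _ [_ antipode _] _ _; apply: antipode. Qed.

Lemma antipoder a : \sum_(x <- Delta a) x.1 * S x.2 = eps a *: 1.
Proof. by case: HA => _ _ [_ _ antipode] _ _; apply: antipode. Qed.

Lemma star_semilinear : linear_for (Num.conj_op \; *:%R) star.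
Proof. by case: HA => _ _ _ [starP _ _ _] _; apply: starP. Qed.

Lemma starM a b : star (a * b) = star b * star a.
Proof. by case: HA => _ _ _ [_ starM _ _] _; apply: starM. Qed.

Lemma starK : involutive star.
Proof. by case: HA => _ _ _ [_ _ starK _] _; apply: starK. Qed.

Lemma teq_Delta_star a : teq (Delta (star a)) [seq (star x.1, star x.2) | x <- Delta a].
Proof. by case: HA => _ _ _ [_ _ _ Delta_star] _; apply: Delta_star. Qed.

Lemma Phi_linear : scalar Phi.
Proof. by case: HA => _ _ _ _ [PhiP _ _ _ _]; apply: PhiP. Qed.

Lemma Phi1 : Phi 1 = 1.
Proof. by case: HA => _ _ _ _ [_ Phi1 _ _ _]. Qed.

Lemma Phi_ge0 a : 0 <= Phi (star a * a).
Proof. by case: HA => _ _ _ _ [_ _ Phi_ge0 _ _]; apply: Phi_ge0. Qed.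

Lemma Phi_invl a : \sum_(x <- Delta a) Phi x.1 *: x.2 = Phi a *: 1.
Proof. by case: HA => _ _ _ _ [_ _ _ inv _]; apply: inv. Qed.

Lemma Phi_invr a : \sum_(x <- Delta a) Phi x.2 *: x.1 = Phi a *: 1.
Proof. by case: HA => _ _ _ _ [_ _ _ _ inv]; apply: inv. Qed.

Lemma PhiZ k a : Phi (k *: a) = k * Phi a.
Proof. exact: (linear_forZ Phi_linear k a). Qed.

Lemma Phi_sum (I : Type) (r : seq I) (F : I -> A) :
  Phi (\sum_(i <- r) F i) = \sum_(i <- r) Phi (F i).
Proof. exact: (linear_for_sum Phi_linear r F). Qed.

Lemma starZ k a : star (k *: a) = k^* *: star a.
Proof. exact: (linear_forZ star_semilinear k a). Qed.

Lemma star_sum (I : Type) (r : seq I) (F : I -> A) :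
  star (\sum_(i <- r) F i) = \sum_(i <- r) star (F i).
Proof. exact: (linear_for_sum star_semilinear r F). Qed.

Ltac linearity := repeat first
  [ exact: Phi_linear | exact: S_linear | exact: linear_id_fun
  | apply: linear_sum_fun => ? | apply: linear_scale_fun
  | apply: linear_scalar_scale_fun | apply: (linear_comp_fun Phi_linear)
  | apply: linear_mulr_fun | apply: linear_mull_fun ].

Lemma sum_DeltaM (Z : lmodType K) (F : A -> A -> Z) a b :
  bilinear_for *:%R *:%R F ->
  \sum_(z <- Delta (a * b)) F z.1 z.2 =
  \sum_(x <- Delta a) \sum_(y <- Delta b) F (x.1 * y.1) (x.2 * y.2).
Proof. by move=> HF; rewrite (teq_bilinear (teq_DeltaM a b) HF) big_allpairs_dep. Qed.

Lemma linear_sum_Delta (Z : lmodType K) (F : A -> A -> Z) :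
  bilinear_for *:%R *:%R F -> linear (fun a => \sum_(z <- Delta a) F z.1 z.2).
Proof.
move=> HF k a b; rewrite (teq_bilinear (teq_DeltaP k a b) HF) big_cat big_map /=.
rewrite scaler_sumr; congr (_ + _).
by apply: eq_bigr => z _; apply: (linear_forZ (HF.1 _)).
Qed.

Lemma sum_Delta_coassoc (Z : lmodType K) (T : A -> A -> A -> Z) a : trilinear T ->
  \sum_(x <- Delta a) \sum_(y <- Delta x.1) T y.1 y.2 x.2 =
  \sum_(x <- Delta a) \sum_(y <- Delta x.2) T x.1 y.1 y.2.
Proof.
move=> HT; have := @teq3_trilinear R _ _ _ _
  [seq (y.1, y.2, x.2) | x <- Delta a, y <- Delta x.1]
  [seq (x.1, y.1, y.2) | x <- Delta a, y <- Delta x.2] T.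
rewrite !big_allpairs_dep /=; apply=> // f g h lf lg lh.
by rewrite !big_allpairs_dep /=; apply: Delta_coassoc.
Qed.

Lemma Phi_form_linear x : scalar (fun y => Phi (star x * y)).
Proof. by move=> k y z; rewrite mulrDr -scalerAr Phi_linear. Qed.

Lemma Phi_form_conj_linear y :
  linear_for (Num.conj_op \; *%R) (fun x => Phi (star x * y)).
Proof. by move=> k x z; rewrite star_semilinear /= mulrDl -scalerAl Phi_linear. Qed.

Lemma Phi_hermitian u v : Phi (star v * u) = (Phi (star u * v))^*.
Proof. exact: (form_hermitian Phi_form_linear Phi_form_conj_linear Phi_ge0). Qed.

Lemma Phi_null v : Phi (star v * v) = 0 -> forall c, Phi (c * v) = 0.
Proof.
move=> v0 c; rewrite -[c]starK.
exact: (form_null Phi_form_linear Phi_form_conj_linear Phi_ge0 v0).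
Qed.

Lemma Phi_invariance_l a b :
  \sum_(x <- Delta a) Phi (x.1 * b) *: x.2 = \sum_(y <- Delta b) Phi (a * y.1) *: S y.2.
Proof.
have expand y : Phi (a * y.1) *: S y.2 =
    \sum_(p <- Delta a) \sum_(q <- Delta y.1) Phi (p.1 * q.1) *: (p.2 * q.2 * S y.2).
  rewrite -[in LHS](mul1r (S y.2)) scalerAl -Phi_invl mulr_suml.
  under eq_bigr do rewrite -scalerAl.
  by apply: (sum_DeltaM (F := fun u v => Phi u *: (v * S y.2))); split=> *; linearity.
rewrite (eq_bigr _ (fun y _ => expand y)) exchange_big /=; apply: eq_bigr => p _.
rewrite (sum_Delta_coassoc
  (T := fun u v g => Phi (p.1 * u) *: (p.2 * v * S g))); last first.
  by split=> *; linearity.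
rewrite -[in LHS](counitr b) mulr_sumr Phi_sum scaler_suml; apply: eq_bigr => y _.
rewrite -scaler_sumr; under eq_bigr do rewrite -mulrA.
by rewrite -mulr_sumr antipoder -!scalerAr PhiZ mulr1 scalerA mulrC.
Qed.

Lemma Phi_invariance_r a b :
  \sum_(x <- Delta a) Phi (b * x.2) *: x.1 = \sum_(y <- Delta b) Phi (y.2 * a) *: S y.1.
Proof.
have expand y : Phi (y.2 * a) *: S y.1 =
    \sum_(q <- Delta y.2) \sum_(p <- Delta a) Phi (q.2 * p.2) *: (S y.1 * (q.1 * p.1)).
  rewrite -[in LHS](mulr1 (S y.1)) scalerAr -Phi_invr mulr_sumr.
  under eq_bigr do rewrite -scalerAr.
  by apply: (sum_DeltaM (F := fun u v => Phi v *: (S y.1 * u))); split=> *; linearity.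
rewrite (eq_bigr _ (fun y _ => expand y)).
rewrite -(sum_Delta_coassoc
  (T := fun u v g => \sum_(p <- Delta a) Phi (g * p.2) *: (S u * (v * p.1)))); last first.
  by split=> *; linearity.
rewrite -[in LHS](counitl b); under eq_bigr do rewrite mulr_suml Phi_sum scaler_suml.
rewrite exchange_big; apply: eq_bigr => y _; rewrite exchange_big; apply: eq_bigr => p _.
rewrite -scaler_sumr; under eq_bigr do rewrite mulrA.
by rewrite -mulr_suml antipodel -!scalerAl PhiZ mul1r scalerA mulrC.
Qed.

Lemma Phi_ann_eq0 x : (forall c, Phi (c * x) = 0) -> x = 0.
Proof.
move=> xN.
have annDelta c : \sum_(z <- Delta x) Phi (c * z.2) *: z.1 = 0.
  by rewrite Phi_invariance_r big1 // => y _; rewrite xN scale0r.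
pose G u g := \sum_(z <- Delta u) Phi (S z.2 * g) *: z.1.
have HG : bilinear_for *:%R *:%R G.
  split=> [g|u]; last by linearity.
  by apply: (linear_sum_Delta (F := fun a b => Phi (S b * g) *: a)); split=> *; linearity.
have xG : x = \sum_(y <- Delta x) G y.1 y.2.
  rewrite -[in LHS](counitr x).
  transitivity (\sum_(y <- Delta x) \sum_(z <- Delta y.2) Phi (S z.1 * z.2) *: y.1).
    apply: eq_bigr => y _.
    by rewrite -scaler_suml -Phi_sum antipodel PhiZ Phi1 mulr1.
  symmetry; apply: (sum_Delta_coassoc (T := fun a b g => Phi (S b * g) *: a)).
  by split=> *; linearity.
have [sys Hsys] := reproduces_exists [seq y.1 | y <- Delta x].
rewrite xG (sum_bilinear_contract Hsys _ HG) //.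
apply: big1 => p _; apply: big1 => z _.
have -> : Phi (S z.2 * \sum_(y <- Delta x) p.1 y.1 *: y.2) =
    p.1 (\sum_(y <- Delta x) Phi (S z.2 * y.2) *: y.1).
  rewrite mulr_sumr Phi_sum linear_sum; apply: eq_bigr => y _.
  by rewrite -scalerAr PhiZ linearZ mulrC.
by rewrite annDelta linear0 scale0r.
Qed.

Lemma Phi_faithful v : v != 0 -> 0 < Phi (star v * v).
Proof.
move=> v_neq0; rewrite lt_def Phi_ge0 andbT; apply: contra_neq v_neq0 => v0.
exact: Phi_ann_eq0 (Phi_null v0).
Qed.

Lemma Phi_Delta_adjoint v w :
  \sum_(x <- Delta w) Phi (star v * x.1) *: x.2 =
  \sum_(x <- Delta v) Phi (star x.1 * w) *: star (S x.2).
Proof.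
have := Phi_invariance_l (star w) v.
rewrite (teq_bilinear (B := fun a b => Phi (a * v) *: b) (teq_Delta_star w)); last first.
  by split=> *; linearity.
rewrite big_map /= => /(congr1 star); rewrite !star_sum => star_inv.
transitivity (\sum_(x <- Delta w) star (Phi (star x.1 * v) *: star x.2)).
  by apply: eq_bigr => x _; rewrite starZ starK Phi_hermitian.
rewrite star_inv; apply: eq_bigr => y _.
by rewrite starZ (Phi_hermitian w y.1).
Qed.

Lemma teq_DeltaM_repr b v s : teq (Delta b) s ->
  teq (Delta (b * v)) [seq (y.1 * x.1, y.2 * x.2) | y <- s, x <- Delta v].
Proof.
move=> bs f g lf lg; rewrite (teq_DeltaM b v lf lg) !big_allpairs_dep /=.
rewrite exchange_big [RHS]exchange_big /=; apply: eq_bigr => x _.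
exact: bs (linear_comp_fun lf (linear_mulr_fun _ linear_id_fun))
          (linear_comp_fun lg (linear_mulr_fun _ linear_id_fun)).
Qed.

End CQGHopfStar.

Theorem mainTheorem11 (R : realType) (A : algType R[i])
    (Delta : A -> seq (A * A)) (eps : A -> R[i]) (S : A -> A)
    (star : A -> A) (Phi : A -> R[i]) (B : A -> Prop) :
  is_CQG_Hopf_star Delta eps S star Phi ->
  is_right_coideal_star_subalg Delta star B ->
  is_BRepC Delta eps S star B (fun b a => b * a)
    (fun a => Delta a) (fun a a' => Phi (star a * a')).
Proof.
move=> HA _; split.
- split=> [b k v w _|b b' k v _ _|v|b b' v _ _].
  + by rewrite mulrDr scalerAr.
  + by rewrite mulrDl scalerAl.
  + exact: mul1r.
  + by rewrite mulrA.
- split=> [k v w f g lf [lg _]|v f g h lf [lg _] [lh _]|v].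
  + exact: teq_DeltaP HA k v w f g lf lg.
  + exact: (Delta_coassoc HA v lf lg lh).
  + exact: (counitr HA).
- by move=> b v s _ bs _ f g lf [lg _]; apply: (teq_DeltaM_repr HA v bs lf lg).
- split=> [k u|u v|v]; first exact: (Phi_form_linear HA u k).
  + exact: (Phi_hermitian HA).
  + exact: (Phi_faithful HA).
- split=> [b v w _|v w]; first by rewrite (starM HA) (starK HA) mulrA.
  by exists [::]; rewrite big_nil (Phi_Delta_adjoint HA) subrr.
Qed.
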